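(* Let $k$ be a field and $f\in k[x_1,\dots,x_n]$ a polynomial of degree $d$. Assume that $f$ is computed by a straight-line program of length $N$. Then the limit complexity, in the category $\mathbf{AffVar}_k$ of affine algebraic varieties over $k$ with the basic morphisms listed below, of the zero-set $X\subset\mathbb{A}^n$ of $f$ is $O(N)$.
   Context: Basic morphisms in $\mathbf{AffVar}_k$ (each of unit cost): multiplication by $c$, $\mathbb{A}^1\xrightarrow{c}\mathbb{A}^1$, for each $c\in k$; addition $\mathbb{A}^1\times\mathbb{A}^1\xrightarrow{+}\mathbb{A}^1$; multiplication $\mathbb{A}^1\times\mathbb{A}^1\xrightarrow{\times}\mathbb{A}^1$; the two projections $\pi_1,\pi_2:\mathbb{A}^1\times\mathbb{A}^1\to\mathbb{A}^1$; $\mathbb{A}^1\to\mathbb{A}^0$; and $\mathbb{A}^0\xrightarrow{c}\mathbb{A}^1$ (the point $c$) for each $c\in k$. A straight-line program over $k$ in variables $x_1,\dots,x_n$ is a finite sequence of instructions, each of which introduces an input variable, a constant of $k$, or the sum or product of (or scalar multiple by a constant of) results of earlier instructions; its length is the number of instructions, and it computes $f$ if $f$ is the result of some instruction. Diagrams and limit complexity. A diagram of finite shape $I=(V,E,s,t)$ assigns objects to vertices and morphisms $D(e):D(s(e))\to D(t(e))$ to edges (no commutativity required); subdiagrams are restrictions to full subgraphs. A limit computation with basic morphisms $\mathcal{A}$ is a sequence $(D_0,\dots,D_s)$ where $D_0$ consists only of basic morphisms, each $D_i$ ($i\ge1$) is obtained from $D_{i-1}$ by choosing a full subgraph $J_i$,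 adding a new vertex $v_i$ carrying a limit of $D_{i-1}|_{J_i}$ and edges from $v_i$ to each vertex of $J_i$ carrying the limit cone morphisms, subject to constructivity: if $v_i$ lies in $J_j$ for $j>i$ then $J_i\subseteq J_j$. It computes an object $X$ if an object isomorphic to $X$ appears in $D_s$. Its cost is $s$ plus the number of edges of $D_0$. The limit complexity of $X$ is the minimum cost of a limit computation computing $X$. *)

From HB Require Import structures.
From mathcomp Require Import all_boot all_order all_algebra.
From mathcomp Require Import mpoly.
Set Implicit Arguments. Unset Strict Implicit. Unset Printing Implicit Defensive.
Import GRing.Theory.
Local Open Scope ring_scope.

Section AffVar.
Variable k : fieldType.

(* An affine variety over k is presented as (n, I) with I a radical ideal of
   k[x_1..x_n]; morphisms (n,I) -> (m,J) are m-tuples of polynomials in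
   k[x_1..x_n] pulling J back into I, considered modulo I.  This is the
   opposite of the category of finitely generated reduced k-algebras.      *)
Record avar := AVar { adim : nat; aideal : {mpoly k[adim]} -> Prop }.
Arguments aideal : clear implicits.

Definition is_rad_ideal n (I : {mpoly k[n]} -> Prop) : Prop :=
  [/\ I 0,
      (forall p q, I p -> I q -> I (p + q)),
      (forall p q, I q -> I (p * q)) &
      (forall p m, I (p ^+ m) -> I p)].

Definition is_variety (X : avar) : Prop := is_rad_ideal (aideal X).

Definition rmor (X Y : avar) := (adim Y).-tuple {mpoly k[adim X]}.

Definition is_mor (X Y : avar) (f : rmor X Y) : Prop :=
  forall q, aideal Y q -> aideal X (q \mPo f).

Definition mor_eq (X Y : avar) (f g : rmor X Y) : Prop :=
  forall i, aideal X (tnth f i - tnth g i).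

Definition mcomp (X Y Z : avar) (f : rmor X Y) (g : rmor Y Z) : rmor X Z :=
  [tuple (tnth g i) \mPo f | i < adim Z].

Definition mid (X : avar) : rmor X X := [tuple 'X_i | i < adim X].

Definition avar_iso (X Y : avar) : Prop :=
  exists (f : rmor X Y) (g : rmor Y X),
    [/\ is_mor f, is_mor g, mor_eq (mcomp f g) (mid X) & mor_eq (mcomp g f) (mid Y)].

Definition zero_ideal n : {mpoly k[n]} -> Prop := fun q => q = 0.
Definition A0 : avar := AVar (@zero_ideal 0).
Definition A1 : avar := AVar (@zero_ideal 1).
Definition A2 : avar := AVar (@zero_ideal 2).

Definition x0_1 : {mpoly k[1]} := 'X_(@ord0 0).
Definition x0_2 : {mpoly k[2]} := 'X_(@ord0 1).
Definition x1_2 : {mpoly k[2]} := 'X_(@ord_max 1).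

Definition b_scal (c : k) : rmor A1 A1 := [tuple c *: x0_1].
Definition b_add : rmor A2 A1 := [tuple x0_2 + x1_2].
Definition b_mul : rmor A2 A1 := [tuple x0_2 * x1_2].
Definition b_pi1 : rmor A2 A1 := [tuple x0_2].
Definition b_pi2 : rmor A2 A1 := [tuple x1_2].
Definition b_bang : rmor A1 A0 := [tuple].
Definition b_pt (c : k) : rmor A0 A1 := [tuple c%:MP].

Inductive basic : forall X Y : avar, rmor X Y -> Prop :=
  | Bscal c : basic (b_scal c)
  | Badd : basic b_add
  | Bmul : basic b_mul
  | Bpi1 : basic b_pi1
  | Bpi2 : basic b_pi2
  | Bbang : basic b_bang
  | Bpt c : basic (b_pt c).

Definition basic_obj (X : avar) : Prop := X = A0 \/ X = A1 \/ X = A2.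

(* A limit computation (D_0, ..., D_s) is encoded by its final diagram D_s:
   vertices 0..lc_m-1 are those of D_0; vertex lc_m + i is the vertex v_{i+1}
   added at step i+1 (i < lc_s).  D_0's edges are lc_edges (shape edges
   (a,b) carrying a morphism obj a -> obj b); step i+1 chooses the full
   subgraph on the vertex set lc_J i (of D_i) and adds, for each j in lc_J i,
   an edge lc_m+i -> j carrying the cone morphism lc_leg i j.              *)
Record limcomp := LimComp {
  lc_m : nat;
  lc_s : nat;
  lc_obj : nat -> avar;
  lc_edges : seq {ab : nat * nat & rmor (lc_obj ab.1) (lc_obj ab.2)};
  lc_J : nat -> pred nat;
  lc_leg : forall (i j : nat), rmor (lc_obj (lc_m + i)) (lc_obj j)
}.

Section LC.
Variable L : limcomp.
Local Notation m := (lc_m L).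
Local Notation obj := (lc_obj L).
Local Notation J := (lc_J L).

Definition is_cone (i : nat) (X : avar) (mu : forall j, rmor X (obj j)) : Prop :=
  [/\ (forall j, J i j -> is_mor (mu j)),
      (forall e, e \in lc_edges L -> J i (projT1 e).1 -> J i (projT1 e).2 ->
         mor_eq (mcomp (mu (projT1 e).1) (projT2 e)) (mu (projT1 e).2)) &
      (forall i' j, i' < i -> J i (m + i') -> J i' j -> J i j ->
         mor_eq (mcomp (mu (m + i')) (lc_leg L i' j)) (mu j))]%N.

Definition is_limit_step (i : nat) : Prop :=
  is_variety (obj (m + i)) /\
  is_cone i (lc_leg L i) /\
  forall (X : avar) (mu : forall j, rmor X (obj j)),
    is_variety X -> is_cone i mu ->
    exists phi : rmor X (obj (m + i)),
      [/\ is_mor phi,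
          (forall j, J i j -> mor_eq (mcomp phi (lc_leg L i j)) (mu j)) &
          (forall phi' : rmor X (obj (m + i)), is_mor phi' ->
             (forall j, J i j -> mor_eq (mcomp phi' (lc_leg L i j)) (mu j)) ->
             mor_eq phi phi')].

Definition lc_valid : Prop :=
  [/\ (forall v, v < m -> basic_obj (obj v)),
      (forall e, e \in lc_edges L ->
         [/\ (projT1 e).1 < m, (projT1 e).2 < m & basic (projT2 e)]),
      (forall i j, i < lc_s L -> J i j -> j < m + i),
      (forall i, i < lc_s L -> is_limit_step i) &
      (forall i i', i < i' -> i' < lc_s L -> J i' (m + i) ->
         forall j, J i j -> J i' j)]%N.

Definition lc_cost : nat := (lc_s L + size (lc_edges L))%N.

Definition lc_computes (X : avar) : Prop :=
  exists v, (v < m + lc_s L)%N /\ avar_iso (obj v) X.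
End LC.

Definition limit_complexity_le (X : avar) (c : nat) : Prop :=
  exists L : limcomp, [/\ lc_valid L, lc_computes L X & (lc_cost L <= c)%N].

Definition zero_set n (f : {mpoly k[n]}) : avar :=
  AVar (fun q : {mpoly k[n]} => exists (e : nat) (g : {mpoly k[n]}), q ^+ e = g * f).

Inductive instr (n : nat) :=
  | IVar of 'I_n
  | IConst of k
  | IAdd of nat & nat
  | IMul of nat & nat
  | IScale of k & nat.

(* values of the instructions; references are to (0-based) earlier results *)
Fixpoint slp_vals_rev n (P : seq (instr n)) : seq {mpoly k[n]} :=
  match P with
  | [::] => [::]
  | ins :: P' => let vs := slp_vals_rev P' in
     let get a := nth 0 (rev vs) a in
     (match ins with
      | IVar i => 'X_i
      | IConst c => c%:MP
      | IAdd a b => get a + get b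
      | IMul a b => get a * get b
      | IScale c a => c *: get a
      end) :: vs
  end.

(* program is stored in order, first instruction first *)
Definition slp_values n (P : seq (instr n)) : seq {mpoly k[n]} :=
  rev (slp_vals_rev (rev P)).

Definition instr_ok n (pos : nat) (ins : instr n) : bool :=
  match ins with
  | IVar _ | IConst _ => true
  | IAdd a b | IMul a b => (a < pos) && (b < pos)
  | IScale _ a => a < pos
  end%N.

Definition slp_wf n (P : seq (instr n)) : bool :=
  all (fun p => instr_ok p.1 p.2) (zip (iota 0 (size P)) P).

Definition slp_computes n (P : seq (instr n)) (f : {mpoly k[n]}) : Prop :=
  slp_wf P /\ f \in slp_values P.

End AffVar.

(* Build a finite diagram D_0 of copies of A^0, A^1 and A^2: one
   copy of A^1 for each value computed by the program and for each coordinate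
   of A^n, and for a sum or product an auxiliary A^2 whose two projections
   land on the operands and whose addition or multiplication lands on the
   result; constants are points, and one more point 0 lands on the output.
   A cone over D_0 from X is then determined by its n input coordinates,
   subject only to the condition that f vanishes on them, so the limit of D_0
   is the zero set of f.  This takes one limit step and at most 3N + 1 basic
   edges, hence cost at most 5N. *)

From HB Require Import structures.
From mathcomp Require Import all_boot all_order all_algebra.
From mathcomp Require Import mpoly.
From mathcomp Require Import zify ring.
Set Implicit Arguments. Unset Strict Implicit. Unset Printing Implicit Defensive.
Import GRing.Theory.
Local Open Scope ring_scope.

Section Congruence.
Variables (k : fieldType) (l : nat) (I : {mpoly k[l]} -> Prop).

Definition eqmod (p q : {mpoly k[l]}) : Prop := I (p - q).

Hypothesis HI : is_rad_ideal I.

Lemma eqmod0 p : eqmod p 0 <-> I p.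
Proof. by rewrite /eqmod subr0. Qed.

Lemma eqmod_refl p : eqmod p p.
Proof. by rewrite /eqmod subrr; case: HI. Qed.

Lemma eqmodD p p' q q' : eqmod p p' -> eqmod q q' -> eqmod (p + q) (p' + q').
Proof.
case: HI => _ addI _ _ hp hq; rewrite /eqmod.
have -> : p + q - (p' + q') = (p - p') + (q - q') by ring.
exact: addI.
Qed.

Lemma eqmodMl r p q : eqmod p q -> eqmod (r * p) (r * q).
Proof. by case: HI => _ _ mulI _ h; rewrite /eqmod -mulrBr; apply: mulI. Qed.

Lemma eqmod_sym p q : eqmod p q -> eqmod q p.
Proof. by move/(eqmodMl (-1)); rewrite /eqmod -mulrBr mulN1r opprB. Qed.

Lemma eqmod_trans p q r : eqmod p q -> eqmod q r -> eqmod p r.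
Proof. by move=> hpq hqr; move: (eqmodD hpq hqr); rewrite /eqmod addrKA. Qed.

Lemma eqmodM p p' q q' : eqmod p p' -> eqmod q q' -> eqmod (p * q) (p' * q').
Proof.
move=> hp hq; apply: (@eqmod_trans _ (p * q')); first exact: eqmodMl.
by rewrite ![_ * q']mulrC; apply: eqmodMl.
Qed.

Lemma eqmodZ (c : k) p q : eqmod p q -> eqmod (c *: p) (c *: q).
Proof. by rewrite -!mul_mpolyC; apply: eqmodMl. Qed.

End Congruence.

Section ZeroSet.
Variables (k : fieldType) (n : nat) (f : {mpoly k[n]}).

Lemma zero_set_self : @aideal _ (zero_set f) f.
Proof. by exists 1%N, 1; rewrite expr1 mul1r. Qed.

Lemma zero_set_add (p q : {mpoly k[n]}) :
  @aideal _ (zero_set f) p -> @aideal _ (zero_set f) q -> @aideal _ (zero_set f) (p + q).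
Proof.
move=> [a [g Hg]] [b [h Hh]]; exists (a + b)%N.
rewrite exprDn; apply: (big_ind (fun x => exists g, x = g * f)).
- by exists 0; rewrite mul0r.
- by move=> _ _ [u ->] [v ->]; exists (u + v); rewrite mulrDl.
move=> [i /= _] _; have [lebi|ltib] := leqP b i.
  exists (p ^+ (a + b - i) * q ^+ (i - b) * h *+ 'C(a + b, i)).
  have -> : q ^+ i = q ^+ b * q ^+ (i - b) by rewrite -exprD subnKC.
  by rewrite mulrnAl Hh; congr (_ *+ _); ring.
exists (p ^+ (b - i) * q ^+ i * g *+ 'C(a + b, i)).
have -> : p ^+ (a + b - i) = p ^+ a * p ^+ (b - i) by rewrite -exprD addnBA // ltnW.
by rewrite mulrnAl Hg; congr (_ *+ _); ring.
Qed.

Lemma is_variety_zero_set : is_variety (zero_set f).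
Proof.
split.
- by exists 1%N, 0; rewrite expr1 mul0r.
- exact: zero_set_add.
- by move=> p q [e [g Hg]]; exists e, (p ^+ e * g); rewrite exprMn Hg mulrA.
- by move=> p e [a [g Hg]]; exists (e * a)%N, g; rewrite exprM.
Qed.

End ZeroSet.

Section Morphisms.
Variable k : fieldType.
Implicit Types X Y Z : avar k.

Lemma mor_eqP X Y (g h : rmor X Y) :
  mor_eq g h <-> (forall i, (i < adim Y)%N -> eqmod (@aideal _ X) g`_i h`_i).
Proof.
split=> [H i lti | H i]; last by rewrite !(tnth_nth 0); apply: H.
by have := H (Ordinal lti); rewrite !(tnth_nth 0).
Qed.

Lemma nth_mcomp X Y Z (g : rmor X Y) (h : rmor Y Z) i :
  (i < adim Z)%N -> (mcomp g h)`_i = h`_i \mPo g.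
Proof.
by move=> lti; rewrite -(tnth_nth 0 _ (Ordinal lti)) tnth_mktuple (tnth_nth 0).
Qed.

Lemma is_mor_to_affine X Y (g : rmor X Y) :
  is_variety X -> (forall q, @aideal _ Y q -> q = 0) -> is_mor g.
Proof. by case=> I0 _ _ _ Y0 q /Y0 ->; rewrite comp_mpoly0. Qed.

Lemma basic_obj_affine X (q : {mpoly k[adim X]}) : basic_obj X -> @aideal _ X q -> q = 0.
Proof. by move=> HX; move: q; case: HX => [|[|]] -> q. Qed.

Lemma avar_iso_refl X : is_variety X -> avar_iso X X.
Proof.
move=> HX; have idK : mor_eq (mcomp (mid X) (mid X)) (mid X).
  by move=> i; rewrite tnth_mktuple comp_mpoly_id; apply: eqmod_refl.
by exists (mid X), (mid X); split=> // q; rewrite comp_mpoly_id.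
Qed.

End Morphisms.

(* Codes for the basic morphisms, so that the edges of D_0 can be listed as data
   with a decidable equality. *)
Inductive bcode (k : fieldType) := MScal of k | MAdd | MMul | MPi1 | MPi2 | MPt of k.
Arguments MAdd {k}. Arguments MMul {k}. Arguments MPi1 {k}. Arguments MPi2 {k}.

Definition bcode_enc (k : fieldType) (d : bcode k) : nat * k :=
  match d with
  | MScal c => (0%N, c) | MAdd => (1%N, 0) | MMul => (2%N, 0)
  | MPi1 => (3%N, 0) | MPi2 => (4%N, 0) | MPt c => (5%N, c)
  end.

Definition bcode_dec (k : fieldType) (x : nat * k) : bcode k :=
  match x with
  | (0%N, c) => MScal c | (1%N, _) => MAdd | (2%N, _) => MMul
  | (3%N, _) => MPi1 | (4%N, _) => MPi2 | (_, c) => MPt c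
  end.

Lemma bcode_encK (k : fieldType) : cancel (@bcode_enc k) (@bcode_dec k).
Proof. by case. Qed.

HB.instance Definition _ (k : fieldType) :=
  Equality.copy (bcode k) (can_type (@bcode_encK k)).

Section BasicCodes.
Variable k : fieldType.
Implicit Types (X Y Z : avar k) (d : bcode k).

Definition nthX l j : {mpoly k[l]} := if insub j is Some i then 'X_i else 0.

Lemma nthX_ord l (i : 'I_l) : nthX l i = 'X_i.
Proof. by rewrite /nthX valK. Qed.

Lemma comp_nthX l l' j (t : l.-tuple {mpoly k[l']}) : nthX l j \mPo t = t`_j.
Proof.
rewrite /nthX; case: insubP => [i _ <-|lej]; first by rewrite comp_mpolyXU.
by rewrite comp_mpoly0 nth_default // size_tuple leqNgt.
Qed.

Definition eval_code l d (g : nat -> {mpoly k[l]}) : {mpoly k[l]} :=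
  match d with
  | MScal c => c *: g 0%N | MAdd => g 0%N + g 1%N | MMul => g 0%N * g 1%N
  | MPi1 => g 0%N | MPi2 => g 1%N | MPt c => c%:MP
  end.

Lemma eval_code_ext l d (g g' : nat -> {mpoly k[l]}) :
  (forall i, g i = g' i) -> eval_code d g = eval_code d g'.
Proof. by move=> gg'; case: d => /= *; rewrite ?gg'. Qed.

Lemma comp_eval_code l l' d (g : nat -> {mpoly k[l]}) (t : l.-tuple {mpoly k[l']}) :
  eval_code d g \mPo t = eval_code d (fun i => g i \mPo t).
Proof. by case: d => /= *; rewrite ?comp_mpolyZ ?comp_mpolyD ?rmorphM ?comp_mpolyC. Qed.

(* Defined between arbitrary objects, so that the edges of D_0 need no casts;
   it is the basic morphism coded by [d] from [code_src d] to A^1. *)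
Definition code_mor X Y d : rmor X Y := [tuple eval_code d (nthX (adim X)) | _ < adim Y].

Definition code_src d : avar k :=
  match d with MScal _ => A1 k | MPt _ => A0 k | _ => A2 k end.

Lemma basic_code_mor d : basic (code_mor (code_src d) (A1 k) d).
Proof.
have x0E : nthX 2 0 = x0_2 k by rewrite (nthX_ord ord0).
have x1E : nthX 2 1 = x1_2 k by rewrite (nthX_ord ord_max).
have tuple1E X (p : {mpoly k[adim X]}) : [tuple p | _ < 1] = [tuple p] :> rmor X (A1 k).
  by apply: eq_from_tnth => i; rewrite tnth_mktuple (ord1 i).
rewrite /code_mor tuple1E.
by case: d => [c||||| c] /=; rewrite ?x0E ?x1E ?(nthX_ord ord0); constructor.
Qed.

Lemma mor_eq_code_mor X Y Z (mu : rmor X Y) (nu : rmor X Z) d : adim Z = 1%N ->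
  mor_eq (mcomp mu (code_mor Y Z d)) nu <-> eqmod (@aideal _ X) (eval_code d (nth 0 mu)) nu`_0.
Proof.
move=> Z1; have lt0Z : (0 < adim Z)%N by rewrite Z1.
have compE : (mcomp mu (code_mor Y Z d))`_0 = eval_code d (nth 0 mu).
  rewrite nth_mcomp // -(tnth_nth 0 _ (Ordinal lt0Z)) tnth_mktuple comp_eval_code.
  by apply: eval_code_ext => i; rewrite comp_nthX.
rewrite mor_eqP -compE; split=> [|H i]; first exact.
by move=> ltiZ; have -> : i = 0%N by move: ltiZ; rewrite Z1; case: i.
Qed.

End BasicCodes.

Section StraightLinePrograms.
Variables (k : fieldType) (n : nat).
Implicit Type P : seq (instr k n).

Definition instr_eval (g : nat -> {mpoly k[n]}) (x : instr k n) : {mpoly k[n]} :=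
  match x with
  | IVar i => 'X_i | IConst c => c%:MP | IAdd a b => g a + g b
  | IMul a b => g a * g b | IScale c a => c *: g a
  end.

Lemma instr_eval_ext t x (g g' : nat -> {mpoly k[n]}) :
  instr_ok t x -> (forall a, (a < t)%N -> g a = g' a) -> instr_eval g x = instr_eval g' x.
Proof. by case: x => //= [a b /andP[? ?]|a b /andP[? ?]|c a ?] gg'; rewrite !gg'. Qed.

Lemma slp_values_rcons P x :
  slp_values (rcons P x) = rcons (slp_values P) (instr_eval (nth 0 (slp_values P)) x).
Proof. by rewrite /slp_values rev_rcons /= rev_cons; case: x. Qed.

Lemma size_slp_values P : size (slp_values P) = size P.
Proof. by elim/last_ind: P => // P x IH; rewrite slp_values_rcons !size_rcons IH. Qed.

Lemma slp_wf_nth P t : slp_wf P -> (t < size P)%N -> instr_ok t (nth (IConst n 0) P t).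
Proof.
move=> /(all_nthP (0%N, IConst n 0)) wf ltt.
have := wf t; rewrite size_zip size_iota minnn => /(_ ltt).
by rewrite nth_zip ?size_iota //= nth_iota.
Qed.

Lemma nth_slp_values P t : slp_wf P -> (t < size P)%N ->
  nth 0 (slp_values P) t = instr_eval (nth 0 (slp_values P)) (nth (IConst n 0) P t).
Proof.
move/slp_wf_nth; elim/last_ind: P t => [//|P x IH] t wf.
rewrite size_rcons ltnS => le_t.
have prefixE a : (a < size P)%N -> nth 0 (slp_values (rcons P x)) a = nth 0 (slp_values P) a.
  by move=> ltaP; rewrite slp_values_rcons nth_rcons size_slp_values ltaP.
rewrite (@instr_eval_ext t _ _ (nth 0 (slp_values P))); last 2 first.
- by apply: wf; rewrite size_rcons ltnS.
- by move=> a lta; apply: prefixE; apply: leq_trans le_t.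
rewrite slp_values_rcons !nth_rcons size_slp_values.
move: le_t; rewrite leq_eqVlt => /predU1P[-> | ltt]; first by rewrite ltnn eqxx.
rewrite ltt; apply: IH ltt => s lts; have := wf s; rewrite size_rcons nth_rcons lts.
by apply; apply: ltnW.
Qed.

End StraightLinePrograms.

Inductive vertex := VVal of nat | VAux of nat | VIn of nat | VZero | VLim.

Section Diagram.
Variables (k : fieldType) (n : nat) (P : seq (instr k n)) (f : {mpoly k[n]}).
Local Notation N := (size P).
Local Notation aux t := (N + t)%N.
Local Notation inp i := (N + N + i)%N.
Local Notation zero := (N + N + n)%N.
Local Notation m := (N + N + n).+1.
Local Notation spec := (nat * nat * bcode k)%type.
Local Open Scope nat_scope.

Definition slp_instr t := nth (IConst n 0%R) P t.
Definition slp_val t := nth 0%R (slp_values P) t.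
Definition out_index := index f (slp_values P).

(* Vertex [t < N] carries the value of instruction [t], [aux t] its auxiliary
   object (A^2 for sums and products, A^0 otherwise), [inp i] the i-th
   coordinate of A^n, and [zero] the point 0; the limit is added at [m]. *)
Definition decode j : vertex :=
  if j < N then VVal j else if j < N + N then VAux (j - N)
  else if j < zero then VIn (j - (N + N)) else if j == zero then VZero else VLim.

Local Ltac decode_cases := rewrite /decode; repeat case: ifP => ?; rewrite ?addKn //; lia.

Lemma decode_val t : t < N -> decode t = VVal t.
Proof. by move=> ?; decode_cases. Qed.
Lemma decode_aux t : t < N -> decode (aux t) = VAux t.
Proof. by move=> ?; decode_cases. Qed.
Lemma decode_inp i : i < n -> decode (inp i) = VIn i.
Proof. by move=> ?; decode_cases. Qed.
Lemma decode_zero : decode zero = VZero.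
Proof. by decode_cases. Qed.
Lemma decode_lim i : decode (m + i) = VLim.
Proof. by decode_cases. Qed.

Lemma vertex_cover j : j < m ->
  [\/ (j < N)%N, exists2 t, t < N & j = aux t,
      exists2 i, i < n & j = inp i | j = zero].
Proof.
move=> ltj; case: (ltnP j N) => [|leNj]; first by constructor 1.
case: (ltnP j (N + N)) => [ltj'|le2Nj]; first by constructor 2; exists (j - N); lia.
case: (ltnP j zero) => [ltj''|lezj]; first by constructor 3; exists (j - (N + N)); lia.
by constructor 4; lia.
Qed.

Definition aux_obj t : avar k :=
  match slp_instr t with IAdd _ _ | IMul _ _ => A2 k | _ => A0 k end.

Definition vertex_obj v : avar k :=
  match v with
  | VVal _ | VIn _ => A1 k | VAux t => aux_obj t | VZero => A0 k | VLim => zero_set f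
  end.

Definition vobj j := vertex_obj (decode j).

Definition aux_coords t : seq {mpoly k[n]} :=
  match slp_instr t with IAdd a b | IMul a b => [:: slp_val a; slp_val b] | _ => [::] end.

Definition vertex_coords v : seq {mpoly k[n]} :=
  match v with
  | VVal t => [:: slp_val t] | VAux t => aux_coords t | VIn i => [:: nthX k n i]
  | VZero | VLim => [::]
  end.

Lemma size_vertex_coords v : size (vertex_coords v) <= adim (vertex_obj v).
Proof. by case: v => //= t; rewrite /aux_coords /aux_obj; case: slp_instr. Qed.

Definition limit_leg j : rmor (zero_set f) (vobj j) :=
  [tuple nth 0%R (vertex_coords (decode j)) i | i < adim (vobj j)].

Lemma nth_limit_leg j i : nth 0%R (limit_leg j) i = nth 0%R (vertex_coords (decode j)) i.
Proof.
case: (ltnP i (adim (vobj j))) => [lti|lei].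
  by rewrite -(tnth_nth 0%R _ (Ordinal lti)) tnth_mktuple.
by rewrite !nth_default ?size_tuple // (leq_trans (size_vertex_coords _) lei).
Qed.

Lemma vobj_lim i : zero_set f = vobj (m + i).
Proof. by rewrite /vobj decode_lim. Qed.

Definition instr_edges t : seq spec :=
  match slp_instr t with
  | IVar i => [:: (inp i, t, MScal 1%R)]
  | IConst c => [:: (aux t, t, MPt c)]
  | IAdd a b => [:: (aux t, a, MPi1); (aux t, b, MPi2); (aux t, t, MAdd)]
  | IMul a b => [:: (aux t, a, MPi1); (aux t, b, MPi2); (aux t, t, MMul)]
  | IScale c a => [:: (a, t, MScal c)]
  end.

Definition out_edge : spec := (zero, out_index, MPt 0%R).

Definition edge_specs : seq spec :=
  flatten [seq instr_edges t | t <- iota 0 N] ++ [:: out_edge].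

Lemma size_edge_specs : size edge_specs <= 3 * N + 1.
Proof.
rewrite size_cat leq_add2r -[X in 3 * X](size_iota 0 N).
elim: (iota 0 N) => //= t s IH; rewrite size_cat mulnS leq_add //.
by rewrite /instr_edges; case: slp_instr.
Qed.

Lemma edge_specsP x : x \in edge_specs ->
  (exists2 t, t < N & x \in instr_edges t) \/ x = out_edge.
Proof.
rewrite mem_cat inE => /orP[/flatten_mapP[t]|/eqP]; last by right.
by rewrite mem_iota => /andP[_ ltt] xt; left; exists t.
Qed.

Lemma instr_edges_sub t x : t < N -> x \in instr_edges t -> x \in edge_specs.
Proof.
by move=> ltt xt; rewrite mem_cat; apply/orP; left; apply/flatten_mapP; exists t; rewrite ?mem_iota.
Qed.

Lemma operand_edges t a b : slp_instr t = IAdd k n a b \/ slp_instr t = IMul k n a b ->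
  (aux t, a, MPi1) \in instr_edges t /\ (aux t, b, MPi2) \in instr_edges t.
Proof. by rewrite /instr_edges => -[] ->; rewrite !inE !eqxx ?orbT. Qed.

Definition mk_edge (x : spec) : {ab : nat * nat & rmor (vobj ab.1) (vobj ab.2)} :=
  let: (a, b, d) := x in existT _ (a, b) (code_mor (vobj a) (vobj b) d).

Definition slp_limcomp : limcomp k :=
  @LimComp k m 1 vobj (map mk_edge edge_specs) (fun _ j => j < m)
    (fun i j => ecast X (rmor X (vobj j)) (vobj_lim i) (limit_leg j)).

Hypotheses (wfP : slp_wf P) (fP : f \in slp_values P).

Lemma slp_instr_ok t : t < N -> instr_ok t (slp_instr t).
Proof. exact: slp_wf_nth. Qed.

Lemma slp_valE t : t < N -> slp_val t = instr_eval slp_val (slp_instr t).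
Proof. exact: nth_slp_values. Qed.

Lemma out_index_lt : out_index < N.
Proof. by rewrite /out_index -(size_slp_values P) index_mem. Qed.

Lemma slp_val_out : slp_val out_index = f.
Proof. exact: nth_index. Qed.

Definition edge_ok (x : spec) : Prop :=
  let: (a, b, d) := x in [/\ a < m, b < N & vobj a = code_src d].

Lemma edge_specs_ok x : x \in edge_specs -> edge_ok x.
Proof.
case/edge_specsP => [[t ltt]|->]; last first.
  by split; [lia | exact: out_index_lt | rewrite /vobj decode_zero].
have := slp_instr_ok ltt; rewrite /instr_edges.
case E: (slp_instr t) => [i|c|a b|a b|c a] /= ok; rewrite !inE.
3,4: case/andP: ok => lta ltb; case/or3P => /eqP -> /=;
    by split; [lia | lia | rewrite /vobj decode_aux //= /aux_obj E].
- by move=> /eqP -> /=; have ltin := ltn_ord i; split; [lia | done | rewrite /vobj decode_inp].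
- by move=> /eqP -> /=; split; [lia | done | rewrite /vobj decode_aux //= /aux_obj E].
- by move=> /eqP -> /=; split; [lia | done | rewrite /vobj decode_val //; lia].
Qed.

Definition edge_holds l (I : {mpoly k[l]} -> Prop) (w : nat -> nat -> {mpoly k[l]}) (x : spec) :=
  let: (a, b, d) := x in eqmod I (eval_code d (w a)) (w b 0).

Lemma cone_edgesP X (mu : forall j, rmor X (vobj j)) :
  (forall e, e \in map mk_edge edge_specs -> (projT1 e).1 < m -> (projT1 e).2 < m ->
     mor_eq (mcomp (mu (projT1 e).1) (projT2 e)) (mu (projT1 e).2))
  <-> (forall x, x \in edge_specs -> edge_holds (@aideal _ X) (fun j => nth 0%R (mu j)) x).
Proof.
have dim1 b : b < N -> adim (vobj b) = 1 by move=> ltb; rewrite /vobj decode_val.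
split=> H x.
- case: x => [[a b] d] xE; have [lta ltb _] := edge_specs_ok xE.
  have ltbm : b < m by lia.
  have := H _ (map_f mk_edge xE) lta ltbm.
  by rewrite /= mor_eq_code_mor ?dim1.
- case/mapP => -[[a b] d] xE -> /= _ _; have [_ ltb _] := edge_specs_ok xE.
  by apply/mor_eq_code_mor; [exact: dim1 | exact: H xE].
Qed.

Section ConeEquations.
Variables (l : nat) (I : {mpoly k[l]} -> Prop) (w : nat -> nat -> {mpoly k[l]}).
Hypotheses (HI : is_rad_ideal I) (Hw : forall x, x \in edge_specs -> edge_holds I w x).

Definition cone_point : n.-tuple {mpoly k[l]} := [tuple w (inp i) 0 | i < n].

Lemma instr_edge_holds t x : t < N -> x \in instr_edges t -> edge_holds I w x.
Proof. by move=> ltt /(instr_edges_sub ltt) /Hw. Qed.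

Lemma operand_coords t a b : t < N -> slp_instr t = IAdd k n a b \/ slp_instr t = IMul k n a b ->
  eqmod I (w (aux t) 0) (w a 0) /\ eqmod I (w (aux t) 1) (w b 0).
Proof.
by move=> ltt /operand_edges[ea eb]; split; [move: ea | move: eb] => /(instr_edge_holds ltt).
Qed.

Lemma cone_val t : t < N -> eqmod I (slp_val t \mPo cone_point) (w t 0).
Proof.
elim/ltn_ind: t => t IH ltt; rewrite slp_valE //.
have ok := slp_instr_ok ltt; have Et := instr_edge_holds ltt.
rewrite /instr_edges in Et.
case E: (slp_instr t) ok Et => [i|c|a b|a b|c a] /= ok Et.
- have := Et _ (mem_head _ _); rewrite /= scale1r comp_mpolyXU.
  by rewrite (nth_mktuple _ _ i).
- by have := Et _ (mem_head _ _); rewrite /= comp_mpolyC.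
- case/andP: ok => lta ltb; have [ea eb] := operand_coords ltt (or_introl E).
  have := Et (aux t, t, MAdd); rewrite !inE eqxx !orbT /= comp_mpolyD => /(_ isT) e.
  apply: (eqmod_trans HI _ e); apply: (eqmodD HI).
  + exact: (eqmod_trans HI (IH a lta (ltn_trans lta ltt)) (eqmod_sym HI ea)).
  + exact: (eqmod_trans HI (IH b ltb (ltn_trans ltb ltt)) (eqmod_sym HI eb)).
- case/andP: ok => lta ltb; have [ea eb] := operand_coords ltt (or_intror E).
  have := Et (aux t, t, MMul); rewrite !inE eqxx !orbT /= rmorphM => /(_ isT) e.
  apply: (eqmod_trans HI _ e); apply: (eqmodM HI).
  + exact: (eqmod_trans HI (IH a lta (ltn_trans lta ltt)) (eqmod_sym HI ea)).
  + exact: (eqmod_trans HI (IH b ltb (ltn_trans ltb ltt)) (eqmod_sym HI eb)).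
- have := Et _ (mem_head _ _); rewrite /= comp_mpolyZ => e.
  apply: (eqmod_trans HI _ e); exact: (eqmodZ HI _ (IH a ok (ltn_trans ok ltt))).
Qed.

Lemma cone_point_root : I (f \mPo cone_point).
Proof.
have := Hw (x := out_edge); rewrite mem_cat mem_head orbT /= mpolyC0 => /(_ isT) e0.
apply/(eqmod0 I); rewrite -slp_val_out.
exact: (eqmod_trans HI (cone_val out_index_lt) (eqmod_sym HI e0)).
Qed.

Lemma cone_point_zero_set q : @aideal _ (zero_set f) q -> I (q \mPo cone_point).
Proof.
case=> e [g qe]; case: HI => _ _ mulI radI; apply: (radI _ e).
by rewrite -rmorphXn qe rmorphM; apply: mulI cone_point_root.
Qed.

Lemma cone_point_coords j r : j < m -> r < adim (vobj j) ->
  eqmod I (nth 0%R (vertex_coords (decode j)) r \mPo cone_point) (w j r).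
Proof.
case/vertex_cover => [ltj | [t ltt ->] | [i lti ->] | ->]; rewrite /vobj.
- by rewrite decode_val //= ltnS leqn0 => /eqP ->; apply: cone_val.
- rewrite decode_aux //= /aux_obj /aux_coords.
  have operandsE a b : a < t -> b < t ->
      slp_instr t = IAdd k n a b \/ slp_instr t = IMul k n a b -> r < 2 ->
      eqmod I (nth 0%R [:: slp_val a; slp_val b] r \mPo cone_point) (w (aux t) r).
    move=> lta ltb /(operand_coords ltt) [ea eb]; case: r => [|[|//]] _ /=.
    + exact: (eqmod_trans HI (cone_val (ltn_trans lta ltt)) (eqmod_sym HI ea)).
    + exact: (eqmod_trans HI (cone_val (ltn_trans ltb ltt)) (eqmod_sym HI eb)).
  have := slp_instr_ok ltt.
  case E: (slp_instr t) => [||a b|a b|] //= /andP[lta ltb].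
    by apply: operandsE => //; left.
  by apply: operandsE => //; right.
- rewrite decode_inp //= ltnS leqn0 => /eqP ->.
  rewrite comp_nthX -(tnth_nth 0%R _ (Ordinal lti)) tnth_mktuple.
  exact: eqmod_refl.
- by rewrite decode_zero.
Qed.

End ConeEquations.

Lemma limit_legs_edges x : x \in edge_specs ->
  edge_holds (@aideal _ (zero_set f)) (fun j => nth 0%R (limit_leg j)) x.
Proof.
have Zf := is_variety_zero_set f.
case/edge_specsP => [[t ltt] | ->]; last first.
  rewrite /= nth_limit_leg decode_val ?out_index_lt //= slp_val_out mpolyC0.
  by apply: (eqmod_sym Zf); apply/eqmod0; apply: zero_set_self.
have ok := slp_instr_ok ltt; have vt := slp_valE ltt.
rewrite /instr_edges; case E: (slp_instr t) ok vt => [i|c|a b|a b|c a] /= ok vt; rewrite !inE.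
3,4: case/andP: ok => lta ltb;
  have [ltaN ltbN] := conj (ltn_trans lta ltt) (ltn_trans ltb ltt);
  case/or3P => /eqP -> /=;
  by rewrite !nth_limit_leg decode_aux // decode_val //= /aux_coords E /= ?vt; apply: eqmod_refl.
- move=> /eqP -> /=; rewrite !nth_limit_leg decode_inp // decode_val //= vt.
  by rewrite nthX_ord scale1r; apply: eqmod_refl.
- by move=> /eqP -> /=; rewrite nth_limit_leg decode_val //= vt; apply: eqmod_refl.
- have ltaN := ltn_trans ok ltt.
  move=> /eqP -> /=; rewrite !nth_limit_leg !decode_val //= vt.
  exact: eqmod_refl.
Qed.

Lemma vobj_basic j : j < m -> basic_obj (vobj j).
Proof.
rewrite /vobj /basic_obj; case/vertex_cover => [ltj | [t ltt ->] | [i lti ->] | ->].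
- by rewrite decode_val //; right; left.
- by rewrite decode_aux //= /aux_obj; case: slp_instr; auto.
- by rewrite decode_inp //; right; left.
- by rewrite decode_zero; left.
Qed.

Lemma limit_legs_cone : is_cone (L := slp_limcomp) 0 limit_leg.
Proof.
split=> //.
- move=> j ltj; apply: is_mor_to_affine (is_variety_zero_set f) _ => q.
  exact/basic_obj_affine/vobj_basic.
- by apply/cone_edgesP; apply: limit_legs_edges.
Qed.

Lemma limit_legs_universal X (mu : forall j, rmor X (vobj j)) :
  is_variety X -> is_cone (L := slp_limcomp) 0 mu ->
  exists phi : rmor X (zero_set f),
    [/\ is_mor phi,
        forall j, j < m -> mor_eq (mcomp phi (limit_leg j)) (mu j) &
        forall phi' : rmor X (zero_set f), is_mor phi' ->
          (forall j, j < m -> mor_eq (mcomp phi' (limit_leg j)) (mu j)) -> mor_eq phi phi'].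
Proof.
move=> HX [_ /cone_edgesP Hmu _]; exists (cone_point (fun j => nth 0%R (mu j))); split.
- by move=> q /(cone_point_zero_set HX Hmu).
- move=> j ltj; apply/mor_eqP => r ltr.
  by rewrite nth_mcomp // nth_limit_leg; apply: cone_point_coords.
- move=> phi' _ phi'_mu i; have lti := ltn_ord i.
  have ltim : inp i < m by rewrite ltnS leq_add2l ltnW.
  have dim1 : 0 < adim (vobj (inp i)) by rewrite /vobj decode_inp.
  have := (mor_eqP _ _).1 (phi'_mu _ ltim) 0 dim1.
  rewrite nth_mcomp // nth_limit_leg decode_inp //= comp_nthX.
  rewrite tnth_mktuple (tnth_nth 0%R phi').
  exact: eqmod_sym.
Qed.

Lemma slp_limcomp_step : is_limit_step slp_limcomp 0.
Proof.
(* Generalizing the limit object removes the cast in the legs. *)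
rewrite /is_limit_step /=; case: (vobj (m + 0)) / (vobj_lim 0).
split; first exact: is_variety_zero_set.
by split; [exact: limit_legs_cone | exact: limit_legs_universal].
Qed.

Lemma slp_limcomp_valid : lc_valid slp_limcomp.
Proof.
split=> //=.
- exact: vobj_basic.
- move=> _ /mapP[[[a b] d] xE ->] /=; have [lta ltb srcE] := edge_specs_ok xE.
  split=> //; first by lia.
  by rewrite srcE /vobj decode_val //; apply: basic_code_mor.
- by move=> i j _ ltj; rewrite ltn_addr.
- by case=> // _; apply: slp_limcomp_step.
Qed.

Lemma slp_limcomp_computes : lc_computes slp_limcomp (zero_set f).
Proof.
exists m; split; first by rewrite /= addn1.
by rewrite /= -[m]addn0 -vobj_lim; apply/avar_iso_refl/is_variety_zero_set.
Qed.

Lemma slp_limcomp_cost : lc_cost slp_limcomp <= 5 * N.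
Proof.
have N_gt0 : 0 < N by rewrite -(size_slp_values P); case: (slp_values P) fP.
by rewrite /lc_cost /= size_map; have := size_edge_specs; lia.
Qed.

End Diagram.

Theorem theorem4p2 :
  exists C : nat, forall (k : fieldType) (n : nat) (f : {mpoly k[n]})
    (P : seq (instr k n)),
    slp_computes P f ->
    limit_complexity_le (zero_set f) (C * size P).
Proof.
exists 5 => k n f P [wfP fP]; exists (slp_limcomp P f); split.
- exact: slp_limcomp_valid.
- exact: slp_limcomp_computes.
- exact: slp_limcomp_cost.
Qed.
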